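(* Let $(A(t))_{t\in\mathbb{N}_0}$ be a sequence of row-stochastic matrices in $\mathbb{R}_{\ge 0}^{n\times n}$ such that: (i) every $A(t)$ has strictly positive diagonal entries; (ii) for every $t$ and all $i,j$, $A(t)_{ij}>0\iff A(t)_{ji}>0$; (iii) there is $\delta>0$ such that for every $t$ every positive entry of $A(t)$ is greater than $\delta$. For $t_0<t_1$ let $A(t_0,t_1):=A(t_1-1)A(t_1-2)\cdots A(t_0)$. Then for every two time steps $t_0<t_1$, the lowest positive entry of $A(t_0,t_1)$ is greater than $\delta^{n^2-n+2}$. *)

From mathcomp Require Import all_boot all_order all_algebra.
From mathcomp Require Import reals.
Set Implicit Arguments. Unset Strict Implicit. Unset Printing Implicit Defensive.
Import Order.TTheory GRing.Theory Num.Theory.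
Local Open Scope ring_scope.

Definition row_stochastic (R : realType) (n : nat) (A : 'M[R]_n) : Prop :=
  (forall i j, 0 <= A i j) /\ (forall i, \sum_(j < n) A i j = 1).

Fixpoint prod_seg (R : realType) (n : nat) (A : nat -> 'M[R]_n) (t0 k : nat)
  : 'M[R]_n :=
  match k with
  | 0 => 1%:M
  | k'.+1 => A (t0 + k')%N *m prod_seg A t0 k'
  end.

(* The paper's A(t0,t1) := A(t1-1) A(t1-2) ... A(t0), for t0 < t1. *)
Definition prod_int (R : realType) (n : nat) (A : nat -> 'M[R]_n) (t0 t1 : nat)
  : 'M[R]_n := prod_seg A t0 (t1 - t0).

From mathcomp Require Import all_boot all_order all_algebra.
From mathcomp Require Import reals.
From mathcomp Require Import zify.
Set Implicit Arguments. Unset Strict Implicit. Unset Printing Implicit Defensive.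
Import Order.TTheory GRing.Theory Num.Theory.
Local Open Scope ring_scope.

(* Fix a column [j] and let [S] be the support of column [j] of the partial
   product.  By induction, every positive entry of that column is at least
   [delta ^+ #|S|].  Multiplying by the next matrix [B] can only enlarge [S]
   (positive diagonal).  If [S] grows, a positive entry picks up one more
   factor [delta] and [#|S|] grows by at least one; if [S] does not grow, the
   symmetric zero pattern forces [B a l = 0] for [a] in [S] and [l] outside
   [S], so the new entries on [S] are convex combinations of old ones.  Since [#|S| <= n],
   positive entries stay above [delta ^+ n > delta ^+ (n ^ 2 - n + 2)]. *)

Definition col_support (R : realType) (n : nat) (M : 'M[R]_n) (j : 'I_n)
  : {set 'I_n} := [set a | 0 < M a j].

Section MulStep.

Variables (R : realType) (n : nat) (B M : 'M[R]_n) (j : 'I_n).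
Hypothesis B_stoch : row_stochastic B.
Hypothesis M_ge0 : forall a, 0 <= M a j.

Let B_ge0 a l : 0 <= B a l. Proof. by case: B_stoch. Qed.

Let term_ge0 a l : 0 <= B a l * M l j. Proof. exact: mulr_ge0. Qed.

Lemma mulmx_col_ge_term a l : B a l * M l j <= (B *m M) a j.
Proof.
by rewrite mxE (bigD1 l) //= lerDl; apply: sumr_ge0 => k _.
Qed.

Lemma col_support_mulmx_sub :
  (forall a, 0 < B a a) -> col_support M j \subset col_support (B *m M) j.
Proof.
move=> B_diag; apply/subsetP => a; rewrite !inE => Ma.
exact: lt_le_trans (mulr_gt0 (B_diag a) Ma) (mulmx_col_ge_term a a).
Qed.

Lemma mulmx_col_gt0_witness a :
  0 < (B *m M) a j -> exists2 l, 0 < B a l & 0 < M l j.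
Proof.
rewrite mxE => /gt_eqF/negbT/eqP /(psumr_neq0P (fun l _ => term_ge0 a l)) [l /=].
move=> Bl_Ml; have Bl : 0 < B a l.
  by rewrite lt_def B_ge0 andbT; apply: contraTneq Bl_Ml => ->; rewrite mul0r ltxx.
by exists l; rewrite // -(pmulr_rgt0 _ Bl).
Qed.

Lemma mulmx_col_ge_mul (delta c : R) a :
    (forall l, 0 < B a l -> delta <= B a l) -> 0 <= c ->
    (forall l, 0 < M l j -> c <= M l j) ->
  0 < (B *m M) a j -> delta * c <= (B *m M) a j.
Proof.
move=> B_delta c_ge0 M_c /mulmx_col_gt0_witness [l Bl Ml].
apply: le_trans (mulmx_col_ge_term a l).
by apply: le_trans (ler_wpM2l (B_ge0 a l) (M_c l Ml)); rewrite ler_wpM2r ?B_delta.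
Qed.

Lemma mulmx_col_ge_stable (c : R) a :
    (forall a l, 0 < B a l -> 0 < B l a) ->
    (forall l, 0 < M l j -> c <= M l j) ->
    col_support (B *m M) j \subset col_support M j ->
  0 < M a j -> c <= (B *m M) a j.
Proof.
move=> B_sym M_c /subsetP BM_sub Ma.
have [_ /(_ a) rowB] := B_stoch.
rewrite -[c]mul1r -rowB mulr_suml mxE; apply: ler_sum => l _.
have [->|Bl_neq0] := eqVneq (B a l) 0; first by rewrite !mul0r.
have Bl : 0 < B a l by rewrite lt_def Bl_neq0 B_ge0.
apply: ler_wpM2l; first exact: B_ge0.
apply: M_c.
have BMl : l \in col_support (B *m M) j.
  rewrite inE; apply: lt_le_trans (mulmx_col_ge_term l a).
  exact: mulr_gt0 (B_sym _ _ Bl) Ma.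
by move: (BM_sub l BMl); rewrite inE.
Qed.

Lemma mulmx_col_support_lower (delta : R) :
    (forall a, 0 < B a a) -> (forall a l, 0 < B a l -> 0 < B l a) ->
    (forall a l, 0 < B a l -> delta <= B a l) -> 0 <= delta -> delta <= 1 ->
    (forall a, 0 < M a j -> delta ^+ #|col_support M j| <= M a j) ->
  forall a, 0 < (B *m M) a j ->
    delta ^+ #|col_support (B *m M) j| <= (B *m M) a j.
Proof.
move=> B_diag B_sym B_delta delta_ge0 delta_le1 M_lower a BMa.
have sub_supp := col_support_mulmx_sub B_diag.
have [grow | stall] := ltnP #|col_support M j| #|col_support (B *m M) j|.
  apply: le_trans (ler_wiXn2l delta_ge0 delta_le1 grow) _.
  by rewrite exprS; apply: mulmx_col_ge_mul; rewrite ?exprn_ge0 //; apply: B_delta.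
have eq_supp : col_support M j = col_support (B *m M) j.
  by apply/eqP; rewrite eqEcard sub_supp.
rewrite -eq_supp; apply: mulmx_col_ge_stable => //; first by rewrite eq_supp.
have : a \in col_support (B *m M) j by rewrite inE.
by rewrite -eq_supp inE.
Qed.

End MulStep.

Lemma row_stochastic_le1 (R : realType) (n : nat) (B : 'M[R]_n) a b :
  row_stochastic B -> B a b <= 1.
Proof.
case=> B_ge0 /(_ a) <-.
by rewrite (bigD1 b) //= lerDl; apply: sumr_ge0 => l _.
Qed.

Section ProductBound.

Variables (R : realType) (n : nat) (A : nat -> 'M[R]_n) (delta : R).
Hypothesis A_stoch : forall t, row_stochastic (A t).
Hypothesis A_diag : forall t a, 0 < A t a a.
Hypothesis A_sym : forall t a b, 0 < A t a b -> 0 < A t b a.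
Hypothesis A_delta : forall t a b, 0 < A t a b -> delta <= A t a b.
Hypothesis delta_ge0 : 0 <= delta.
Hypothesis delta_le1 : delta <= 1.

Lemma prod_seg_ge0 t0 k a b : 0 <= prod_seg A t0 k a b.
Proof.
elim: k a b => [|k IHk] a b /=; first by rewrite mxE ler0n.
rewrite mxE; apply: sumr_ge0 => l _; apply: mulr_ge0 (IHk _ _).
by case: (A_stoch (t0 + k)).
Qed.

Lemma prod_seg_col_lower t0 k j a :
  0 < prod_seg A t0 k a j ->
  delta ^+ #|col_support (prod_seg A t0 k) j| <= prod_seg A t0 k a j.
Proof.
elim: k a => [|k IHk] a.
  have -> : col_support (prod_seg A t0 0) j = [set j].
    by apply/setP => b; rewrite !inE mxE; case: eqP; rewrite ?ltr01 ?ltxx.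
  by rewrite cards1 expr1 /= mxE; case: eqP; rewrite ?ltxx.
exact: (mulmx_col_support_lower (A_stoch _) (fun b => prod_seg_ge0 t0 k b j)
         (A_diag _) (@A_sym _) (@A_delta _) delta_ge0 delta_le1 IHk).
Qed.

End ProductBound.

Lemma ltn_sqrnB_add2 (n : nat) : (n < n ^ 2 - n + 2)%N.
Proof. rewrite -mulnn; nia. Qed.

Theorem proposition2 (R : realType) (n : nat) (A : nat -> 'M[R]_n) (delta : R) :
  (forall t, row_stochastic (A t)) ->
  (forall t (i : 'I_n), 0 < A t i i) ->
  (forall t (i j : 'I_n), 0 < A t i j <-> 0 < A t j i) ->
  0 < delta ->
  (forall t (i j : 'I_n), 0 < A t i j -> delta < A t i j) ->
  forall (t0 t1 : nat), (t0 < t1)%N ->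
  forall (i j : 'I_n), 0 < prod_int A t0 t1 i j ->
    delta ^+ (n ^ 2 - n + 2) < prod_int A t0 t1 i j.
Proof.
move=> A_stoch A_diag A_sym delta_gt0 A_delta t0 t1 _ i j Pij.
have delta_lt1 : delta < 1.
  exact: lt_le_trans (A_delta 0%N j j (A_diag 0%N j)) (row_stochastic_le1 _ _ _).
have A_sym' t a b : 0 < A t a b -> 0 < A t b a by move/A_sym.
have A_delta' t a b : 0 < A t a b -> delta <= A t a b by move/A_delta/ltW.
apply: lt_le_trans (prod_seg_col_lower A_stoch A_diag A_sym' A_delta'
                     (ltW delta_gt0) (ltW delta_lt1) Pij).
apply: lt_le_trans (_ : delta ^+ n <= _); first by rewrite ltr_iXn2l ?ltn_sqrnB_add2.
apply: ler_wiXn2l; rewrite ?ltW //.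
by rewrite -[X in (_ <= X)%N]card_ord max_card.
Qed.
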